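(* Let $n \ge 2$, $k \ge 0$, and let $n_1, \dots, n_k$ be even integers with $1 \le n_i \le 2n-2$. Then $\mathcal{P}_n(n_1,\dots,n_k;-n_k,\dots,-n_1)$ is a regular presentation of $Q_{4n}$.
   Context: $Q_{4n}$ is identified with $\langle x, y \mid x^n y^{-2}, xyxy^{-1} \rangle$. A presentation $\langle x, y \mid x^n y^{-2}, R\rangle$ is regular if $x \mapsto x$, $y \mapsto y$ induces a group isomorphism from the group it presents to $Q_{4n}$. For integers $k\ge0$, $n_1,\dots,n_k,m_1,\dots,m_k$, with $n_{k+1} = 1 - \sum_{i=1}^k n_i$, $m_{k+1} = 1 - \sum_{i=1}^k m_i$, $\mathcal{P}_n(n_1,\dots,n_k;m_1,\dots,m_k) = \langle x, y \mid x^n y^{-2},\ x^{n_1} y x^{m_1} y^{-1} \cdots x^{n_{k+1}} y x^{m_{k+1}} y^{-1} \rangle$; thus here $m_i = -n_{k+1-i}$ for $1 \le i \le k$. *)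

(* group presentations on two generators x, y, via words in
   the free monoid on x, x^-1, y, y^-1 modulo the congruence generated by
   free cancellation and the relators. *)
From Stdlib Require Import ZArith List.
Import ListNotations.
Open Scope Z_scope.

Inductive gen : Type := GX | GY.

Definition letter : Type := (gen * bool)%type.
Definition word : Type := list letter.

Definition inv_letter (a : letter) : letter := (fst a, negb (snd a)).

Definition x : letter := (GX, false).
Definition xinv : letter := (GX, true).
Definition y : letter := (GY, false).
Definition yinv : letter := (GY, true).

Definition xpow (m : Z) : word :=
  if 0 <=? m then repeat x (Z.to_nat m) else repeat xinv (Z.to_nat (- m)).

Inductive eqv (rels : list word) : word -> word -> Prop :=
| eqv_refl w : eqv rels w w
| eqv_sym u v : eqv rels u v -> eqv rels v u
| eqv_trans u v w : eqv rels u v -> eqv rels v w -> eqv rels u w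
| eqv_free u v a : eqv rels (u ++ a :: inv_letter a :: v) (u ++ v)
| eqv_rel u v r : In r rels -> eqv rels (u ++ r ++ v) (u ++ v).

Definition rel_xn_ym2 (n : Z) : word := xpow n ++ [yinv; yinv].

Definition Q_rels (n : Z) : list word := [rel_xn_ym2 n; [x; y; x; yinv]].

(* < x, y | x^n y^-2, R > is regular: x |-> x, y |-> y induces a group
   isomorphism onto Q_{4n}.  Since the map is the identity on words, it is
   a well-defined homomorphism iff eqv (P-rels) is contained in eqv (Q-rels),
   and then it is surjective, and injective iff the converse inclusion holds. *)
Definition regular (n : Z) (R : word) : Prop :=
  (forall u v, eqv [rel_xn_ym2 n; R] u v -> eqv (Q_rels n) u v) /\
  (forall u v, eqv (Q_rels n) u v -> eqv [rel_xn_ym2 n; R] u v).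

Fixpoint sumZ (l : list Z) : Z :=
  match l with [] => 0 | a :: l' => a + sumZ l' end.

Fixpoint block_word (ab : list (Z * Z)) : word :=
  match ab with
  | [] => []
  | (a, b) :: ab' => xpow a ++ [y] ++ xpow b ++ [yinv] ++ block_word ab'
  end.

(* The second relator of P_n(n_1..n_k; m_1..m_k), with
   n_{k+1} = 1 - sum n_i and m_{k+1} = 1 - sum m_i
   (ns and ms are assumed of the same length k). *)
Definition P_relator (ns ms : list Z) : word :=
  block_word (combine (ns ++ [1 - sumZ ns]) (ms ++ [1 - sumZ ms])).

Definition P_rels (n : Z) (ns ms : list Z) : list word :=
  [rel_xn_ym2 n; P_relator ns ms].

From Stdlib Require Import ZArith List Lia Setoid Morphisms.
Import ListNotations.
Open Scope Z_scope.

(** In [Q_{4n}] conjugation by [y] inverts [x], so every block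
    [x^a y x^b y^-1] of the relator equals [x^(a-b)]; the exponents of the
    relator sum to zero, hence it holds in [Q_{4n}].

    Conversely, [y^2 = x^n] is central, and when [m_i = -n_(k+1-i)]
    conjugation by [y] sends [W = x^n_1 y x^m_1 y^-1 ... x^n_k y x^m_k y^-1]
    to [W^-1].  With [S = n_1 + ... + n_k] the relator reads
    [W x^(1-S) y x^(1+S) y^-1]; comparing it with its [y]-conjugate gives
    [y x^-2 y^-1 = x^2].  As all [n_i] are even, this evaluates [W = x^(2S)]
    and [y x^-S y^-1 = x^S], and the relator itself becomes
    [y x^-1 y^-1 = x], i.e. the relator [x y x y^-1] of [Q_{4n}]. *)

Arguments xpow : simpl never.

Definition winv (w : word) : word := rev (map inv_letter w).

Definition yconj (w : word) : word := y :: w ++ [yinv].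

Lemma inv_letter_involutive a : inv_letter (inv_letter a) = a.
Proof. destruct a as [g b]; unfold inv_letter; simpl; now rewrite Bool.negb_involutive. Qed.

Lemma winv_involutive w : winv (winv w) = w.
Proof.
  unfold winv. rewrite map_rev, map_map, rev_involutive.
  erewrite map_ext; [apply map_id | intro; apply inv_letter_involutive].
Qed.

Lemma winv_app u v : winv (u ++ v) = winv v ++ winv u.
Proof. unfold winv. now rewrite map_app, rev_app_distr. Qed.

Lemma xpow_nonneg a : 0 <= a -> xpow a = repeat x (Z.to_nat a).
Proof. intro Ha. unfold xpow. now rewrite (proj2 (Z.leb_le 0 a) Ha). Qed.

Lemma xpow_nonpos a : a <= 0 -> xpow a = repeat xinv (Z.to_nat (- a)).
Proof.
  intro Ha. unfold xpow. destruct (0 <=? a) eqn:E; [|reflexivity].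
  apply Z.leb_le in E. now replace a with 0 by lia.
Qed.

Lemma winv_xpow a : winv (xpow a) = xpow (- a).
Proof.
  unfold winv. destruct (Z_le_gt_dec 0 a).
  - rewrite xpow_nonneg, (xpow_nonpos (- a)), Z.opp_involutive by lia.
    now rewrite map_repeat, rev_repeat.
  - rewrite xpow_nonpos, (xpow_nonneg (- a)) by lia.
    now rewrite map_repeat, rev_repeat.
Qed.

Lemma winv_yconj w : winv (yconj w) = yconj (winv w).
Proof. unfold yconj. change (y :: w ++ [yinv]) with ([y] ++ w ++ [yinv]). now rewrite !winv_app. Qed.

Lemma block_word_cons a b L :
  block_word ((a, b) :: L) = xpow a ++ yconj (xpow b) ++ block_word L.
Proof. cbn [block_word]. unfold yconj. cbn [app]. now rewrite <- app_assoc. Qed.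

Section Congruence.

Variable rels : list word.

Local Notation "u ≡ v" := (eqv rels u v) (at level 70).

#[export] Instance eqv_equivalence : Equivalence (eqv rels).
Proof. split; [intro; apply eqv_refl | intros ??; apply eqv_sym | intros ???; apply eqv_trans]. Qed.

Lemma eqv_app_l w u v : u ≡ v -> w ++ u ≡ w ++ v.
Proof.
  induction 1 as [| | | u v a | u v r Hr].
  - reflexivity.
  - now symmetry.
  - etransitivity; eauto.
  - rewrite !app_assoc. apply eqv_free.
  - rewrite (app_assoc w u (r ++ v)), (app_assoc w u v). now apply eqv_rel.
Qed.

Lemma eqv_app_r w u v : u ≡ v -> u ++ w ≡ v ++ w.
Proof.
  induction 1 as [| | | u v a | u v r Hr].
  - reflexivity.
  - now symmetry.
  - etransitivity; eauto.
  - rewrite <- !app_assoc. apply eqv_free.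
  - rewrite <- !app_assoc. now apply eqv_rel.
Qed.

#[export] Instance app_eqv_proper : Proper (eqv rels ==> eqv rels ==> eqv rels) (@app letter).
Proof. intros u u' Hu v v' Hv. transitivity (u' ++ v); [apply eqv_app_r | apply eqv_app_l]; auto. Qed.

#[export] Instance cons_eqv_proper : Proper (eq ==> eqv rels ==> eqv rels) (@cons letter).
Proof. intros a b <- u v H. exact (eqv_app_l [a] u v H). Qed.

#[export] Instance yconj_eqv_proper : Proper (eqv rels ==> eqv rels) yconj.
Proof. intros u v H. unfold yconj. now rewrite H. Qed.

Lemma relator_eqv_nil r : In r rels -> r ≡ [].
Proof. intro Hr. pose proof (eqv_rel rels [] [] r Hr) as E. now rewrite app_nil_r in E. Qed.

Lemma app_winv_eqv_nil w : w ++ winv w ≡ [].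
Proof.
  induction w as [|a w IH]; unfold winv in *; simpl; [reflexivity|].
  rewrite app_assoc, IH. apply (eqv_free rels [] [] a).
Qed.

Lemma winv_app_eqv_nil w : winv w ++ w ≡ [].
Proof. pose proof (app_winv_eqv_nil (winv w)) as E. now rewrite winv_involutive in E. Qed.

Lemma inv_unique_l u v : u ++ v ≡ [] -> u ≡ winv v.
Proof.
  intro E. transitivity (u ++ v ++ winv v).
  - now rewrite app_winv_eqv_nil, app_nil_r.
  - now rewrite app_assoc, E.
Qed.

Lemma inv_unique_r u v : u ++ v ≡ [] -> v ≡ winv u.
Proof.
  intro E. transitivity ((winv u ++ u) ++ v).
  - now rewrite winv_app_eqv_nil.
  - now rewrite <- app_assoc, E, app_nil_r.
Qed.

#[export] Instance winv_eqv_proper : Proper (eqv rels ==> eqv rels) winv.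
Proof. intros u v E. symmetry. apply inv_unique_r. now rewrite E, app_winv_eqv_nil. Qed.

Lemma eqv_app_cancel_r w u v : u ++ w ≡ v ++ w -> u ≡ v.
Proof.
  intro E. rewrite <- (app_nil_r u), <- (app_nil_r v), <- (app_winv_eqv_nil w), !app_assoc.
  now rewrite E.
Qed.

Lemma xpow_congr a b : a = b -> xpow a ≡ xpow b.
Proof. now intros ->. Qed.

Lemma xpow_succ a : xpow (a + 1) ≡ xpow a ++ [x].
Proof.
  destruct (Z_le_gt_dec 0 a).
  - rewrite !xpow_nonneg, Z2Nat.inj_add, repeat_app by lia. reflexivity.
  - rewrite !xpow_nonpos by lia.
    replace (Z.to_nat (- a)) with (Z.to_nat (- (a + 1)) + 1)%nat by lia.
    rewrite repeat_app, <- app_assoc. simpl.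
    now rewrite (eqv_free rels _ [] xinv), app_nil_r.
Qed.

Lemma xpow_pred a : xpow (a - 1) ≡ xpow a ++ [xinv].
Proof.
  rewrite <- (Z.sub_add 1 a) at 2. rewrite xpow_succ, <- app_assoc. simpl.
  now rewrite (eqv_free rels _ [] x), app_nil_r.
Qed.

Lemma xpow_add a b : xpow a ++ xpow b ≡ xpow (a + b).
Proof.
  induction b as [|b IH|b IH] using Z.peano_ind.
  - now rewrite Z.add_0_r, app_nil_r.
  - rewrite <- Z.add_1_r, xpow_succ, app_assoc, IH, Z.add_assoc, xpow_succ. reflexivity.
  - rewrite <- Z.sub_1_r, xpow_pred, app_assoc, IH, Z.add_sub_assoc, xpow_pred. reflexivity.
Qed.

Lemma yconj_nil : yconj [] ≡ [].
Proof. apply (eqv_free rels [] [] y). Qed.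

Lemma yconj_app u v : yconj (u ++ v) ≡ yconj u ++ yconj v.
Proof.
  unfold yconj. cbn [app]. rewrite <- !app_assoc. cbn [app].
  now rewrite (eqv_free rels _ _ yinv).
Qed.

Lemma yconj_xpow_add a b : yconj (xpow a) ++ yconj (xpow b) ≡ yconj (xpow (a + b)).
Proof. now rewrite <- yconj_app, xpow_add. Qed.

Lemma yconj_xpow_mul c d :
  yconj (xpow c) ≡ xpow d -> forall m, yconj (xpow (c * m)) ≡ xpow (d * m).
Proof.
  intros Hcd m. induction m as [|m IH|m IH] using Z.peano_ind.
  - rewrite !Z.mul_0_r. apply yconj_nil.
  - rewrite !Z.mul_succ_r, <- yconj_xpow_add, IH, Hcd. apply xpow_add.
  - apply (eqv_app_cancel_r (yconj (xpow c))).
    rewrite yconj_xpow_add, <- Z.mul_succ_r, Z.succ_pred, IH, Hcd, xpow_add.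
    apply xpow_congr. lia.
Qed.

Lemma block_word_combine_xpow ns ms :
  length ns = length ms ->
  (forall b, In b ms -> yconj (xpow b) ≡ xpow (- b)) ->
  block_word (combine ns ms) ≡ xpow (sumZ ns - sumZ ms).
Proof.
  revert ms; induction ns as [|a ns IH]; intros [|b ms] Hlen Hms;
    try discriminate; [reflexivity|].
  cbn [combine sumZ]. rewrite block_word_cons, Hms, IH by (simpl in *; auto). rewrite !xpow_add. apply xpow_congr. lia.
Qed.

End Congruence.

Lemma eqv_incl rels1 rels2 :
  (forall r, In r rels1 -> eqv rels2 r []) ->
  forall u v, eqv rels1 u v -> eqv rels2 u v.
Proof.
  intros Hrels u v E. induction E as [| | | | u v r Hr].
  - reflexivity.
  - now symmetry.
  - etransitivity; eauto.
  - apply eqv_free.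
  - now rewrite (Hrels r Hr).
Qed.

Lemma block_word_app L1 L2 : block_word (L1 ++ L2) = block_word L1 ++ block_word L2.
Proof.
  induction L1 as [|[a b] L1 IH]; [reflexivity|].
  now rewrite <- app_comm_cons, !block_word_cons, IH, !app_assoc.
Qed.

Fixpoint coblock_word (L : list (Z * Z)) : word :=
  match L with
  | [] => []
  | (a, b) :: L' => yconj (xpow a) ++ xpow b ++ coblock_word L'
  end.

Lemma coblock_word_app L1 L2 : coblock_word (L1 ++ L2) = coblock_word L1 ++ coblock_word L2.
Proof.
  induction L1 as [|[a b] L1 IH]; [reflexivity|].
  simpl. now rewrite IH, !app_assoc.
Qed.

Definition dual_blocks (L : list (Z * Z)) : list (Z * Z) :=
  map (fun p => (- snd p, - fst p)) (rev L).

Lemma winv_block_word L : winv (block_word L) = coblock_word (dual_blocks L).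
Proof.
  unfold dual_blocks. induction L as [|[a b] L IH]; [reflexivity|].
  rewrite block_word_cons, !winv_app, IH, winv_yconj, !winv_xpow.
  simpl rev. rewrite map_app, coblock_word_app. simpl.
  now rewrite app_nil_r, <- app_assoc.
Qed.

Lemma combine_app {A B} (l1 l1' : list A) (l2 l2' : list B) :
  length l1 = length l2 ->
  combine (l1 ++ l1') (l2 ++ l2') = combine l1 l2 ++ combine l1' l2'.
Proof.
  revert l2; induction l1 as [|a l1 IH]; intros [|b l2] Hlen;
    try discriminate; [reflexivity|].
  simpl. rewrite IH; auto.
Qed.

Lemma dual_blocks_combine ns ms :
  length ns = length ms ->
  dual_blocks (combine ns ms) = combine (map Z.opp (rev ms)) (map Z.opp (rev ns)).
Proof.
  unfold dual_blocks. revert ms; induction ns as [|a ns IH]; intros [|b ms] Hlen;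
    try discriminate; [reflexivity|].
  simpl in *. rewrite !map_app, IH, combine_app by (rewrite ?length_map, ?length_rev; lia).
  reflexivity.
Qed.

Lemma opp_rev_involutive l : map Z.opp (rev (map Z.opp (rev l))) = l.
Proof.
  rewrite <- map_rev, rev_involutive, map_map.
  erewrite map_ext; [apply map_id | apply Z.opp_involutive].
Qed.

Lemma sumZ_app l l' : sumZ (l ++ l') = sumZ l + sumZ l'.
Proof. induction l; simpl; lia. Qed.

Lemma sumZ_opp_rev l : sumZ (map Z.opp (rev l)) = - sumZ l.
Proof. induction l; simpl; auto. rewrite map_app, sumZ_app. simpl. lia. Qed.

Lemma sumZ_even l : (forall a, In a l -> Z.Even a) -> Z.Even (sumZ l).
Proof.
  induction l as [|a l IH]; intro Hl; simpl.
  - now exists 0.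
  - destruct (Hl a (or_introl eq_refl)) as [i Hi], IH as [j Hj]; [intros; apply Hl; now right|].
    exists (i + j). lia.
Qed.

Lemma yconj_xpow_Q n b : eqv (Q_rels n) (yconj (xpow b)) (xpow (- b)).
Proof.
  assert (Hx : eqv (Q_rels n) (xpow 1 ++ yconj (xpow 1)) [])
    by (apply relator_eqv_nil; right; now left).
  apply inv_unique_r in Hx. rewrite winv_xpow in Hx.
  rewrite <- (Z.mul_1_l b) at 1. rewrite (yconj_xpow_mul _ _ _ Hx).
  apply xpow_congr. lia.
Qed.

Lemma P_relator_trivial_Q n ns ms :
  length ns = length ms -> eqv (Q_rels n) (P_relator ns ms) [].
Proof.
  intro Hlen. unfold P_relator.
  rewrite block_word_combine_xpow.
  - rewrite !sumZ_app. cbn [sumZ]. now rewrite (xpow_congr _ _ 0) by lia.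
  - rewrite !length_app. simpl. lia.
  - intros. apply yconj_xpow_Q.
Qed.

Section Q4n_relator_from_P.

Variables (rels : list word) (n : Z) (ns : list Z).

Local Notation "u ≡ v" := (eqv rels u v) (at level 70).
Local Notation ms := (map Z.opp (rev ns)).
Local Notation S := (sumZ ns).
Local Notation W := (block_word (combine ns ms)).

Hypothesis xn_ym2_trivial : rel_xn_ym2 n ≡ [].

(** [y^2 = x^n] commutes with [x]. *)
Lemma yconj_yconj_xpow b : yconj (yconj (xpow b)) ≡ xpow b.
Proof.
  assert (Hyy : [y; y] ≡ xpow n).
  { symmetry. exact (inv_unique_l _ _ _ xn_ym2_trivial). }
  assert (Hyiyi : [yinv; yinv] ≡ xpow (- n)).
  { rewrite <- winv_xpow, <- Hyy. reflexivity. }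
  transitivity ([y; y] ++ xpow b ++ [yinv; yinv]).
  - unfold yconj. cbn [app]. now rewrite <- app_assoc.
  - rewrite Hyy, Hyiyi, !xpow_add. apply xpow_congr. lia.
Qed.

Lemma yconj_block_word L : yconj (block_word L) ≡ coblock_word L.
Proof.
  induction L as [|[a b] L IH]; [apply yconj_nil|].
  rewrite block_word_cons, !yconj_app, yconj_yconj_xpow, IH. reflexivity.
Qed.

Lemma length_opp_rev : length ns = length ms.
Proof. now rewrite length_map, length_rev. Qed.

Lemma yconj_W : yconj W ≡ winv W.
Proof.
  rewrite yconj_block_word, winv_block_word, dual_blocks_combine by apply length_opp_rev.
  now rewrite opp_rev_involutive.
Qed.

Lemma P_relator_opp_rev : P_relator ns ms = W ++ xpow (1 - S) ++ yconj (xpow (1 + S)).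
Proof.
  unfold P_relator. rewrite combine_app by apply length_opp_rev.
  rewrite block_word_app, sumZ_opp_rev. cbn [combine]. rewrite block_word_cons.
  now rewrite Z.sub_opp_r, app_nil_r.
Qed.

Hypothesis P_relator_trivial : P_relator ns ms ≡ [].

Lemma W_eqv_l : W ≡ yconj (xpow (- 1 - S)) ++ xpow (S - 1).
Proof.
  pose proof P_relator_trivial as E. rewrite P_relator_opp_rev in E.
  rewrite (inv_unique_l _ _ _ E), winv_app, winv_yconj, !winv_xpow.
  now rewrite (xpow_congr _ (- (1 - S)) (S - 1)), Z.opp_add_distr by lia.
Qed.

Lemma W_eqv_r : W ≡ yconj (xpow (1 - S)) ++ xpow (1 + S).
Proof.
  assert (E : winv W ++ yconj (xpow (1 - S)) ++ xpow (1 + S) ≡ []).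
  { rewrite <- yconj_W, <- (yconj_yconj_xpow (1 + S)), <- !yconj_app, <- P_relator_opp_rev.
    now rewrite P_relator_trivial, yconj_nil. }
  rewrite (inv_unique_r _ _ _ E). now rewrite winv_involutive.
Qed.

Lemma yconj_xpow_m2 : yconj (xpow (-2)) ≡ xpow 2.
Proof.
  apply (eqv_app_cancel_r _ (xpow (S - 1))).
  transitivity (yconj (xpow (S - 1)) ++ W).
  - rewrite W_eqv_l, app_assoc, yconj_xpow_add. now replace (S - 1 + (-1 - S)) with (-2) by lia.
  - rewrite W_eqv_r, app_assoc, yconj_xpow_add, Z.add_sub_assoc, Z.sub_add, Z.sub_diag.
    rewrite yconj_nil, !xpow_add. apply xpow_congr. lia.
Qed.

Lemma yconj_xpow_even j : yconj (xpow (2 * j)) ≡ xpow (- (2 * j)).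
Proof.
  pose proof (yconj_xpow_mul _ _ _ yconj_xpow_m2 (- j)) as E.
  now rewrite (Z.mul_opp_r 2), <- Z.mul_opp_comm in E.
Qed.

Hypothesis ns_even : forall a, In a ns -> Z.Even a.

Lemma W_eqv_xpow : W ≡ xpow (2 * S).
Proof.
  rewrite block_word_combine_xpow.
  - apply xpow_congr. rewrite sumZ_opp_rev. lia.
  - apply length_opp_rev.
  - intros b Hb. apply in_map_iff in Hb as [a [<- Ha]].
    apply in_rev, ns_even in Ha as [j ->].
    now rewrite <- Z.mul_opp_r, yconj_xpow_even, Z.mul_opp_r.
Qed.

Lemma yconj_xpow_m1 : yconj (xpow (-1)) ≡ xpow 1.
Proof.
  destruct (sumZ_even _ ns_even) as [j Hj].
  assert (HS : yconj (xpow (- S)) ≡ xpow S).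
  { rewrite Hj, <- Z.mul_opp_r, yconj_xpow_even. apply xpow_congr. lia. }
  apply (eqv_app_cancel_r _ (xpow (2 * S - 1))).
  transitivity (yconj (xpow (-1)) ++ yconj (xpow (- S)) ++ xpow (S - 1)).
  - rewrite HS, xpow_add. apply eqv_app_l, xpow_congr. lia.
  - rewrite app_assoc, yconj_xpow_add, Z.add_opp_r, <- W_eqv_l, W_eqv_xpow, xpow_add.
    apply xpow_congr. lia.
Qed.

Lemma Q_relator_from_P : [x; y; x; yinv] ≡ [].
Proof.
  change [x; y; x; yinv] with (xpow 1 ++ yconj (xpow 1)).
  rewrite <- (winv_involutive (yconj (xpow 1))), winv_yconj, winv_xpow, yconj_xpow_m1.
  rewrite winv_xpow. apply (xpow_add _ 1 (-1)).
Qed.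

End Q4n_relator_from_P.

Theorem theorem3p9 (n : Z) (ns : list Z) :
  2 <= n ->
  (forall ni, In ni ns -> Z.Even ni /\ 1 <= ni <= 2 * n - 2) ->
  regular n (P_relator ns (map Z.opp (rev ns))).
Proof.
  intros _ Hns.
  split; apply eqv_incl; intros r [<- | [<- | []]].
  - apply relator_eqv_nil. now left.
  - apply P_relator_trivial_Q, length_opp_rev.
  - apply relator_eqv_nil. now left.
  - apply (Q_relator_from_P _ n ns).
    + apply relator_eqv_nil. now left.
    + apply relator_eqv_nil. right. now left.
    + intros a Ha. apply (Hns a Ha).
Qed.
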